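(* Consider Directed Simplicial Neural Networks (Dir-SNNs) applied to the directed flag complexes of digraphs, and Directed Graph Neural Networks (Dir-GNNs) applied to the digraphs themselves, all initialized with identical constant input features. There exists a Dir-SNN that is strictly more powerful than Dir-GNNs at distinguishing non-isomorphic digraphs. That is: (i) for any two digraphs $G_1, G_2$ that some Dir-GNN distinguishes, this Dir-SNN distinguishes their directed flag complexes $\mathcal{K}_{G_1}, \mathcal{K}_{G_2}$; and (ii) there exist non-isomorphic digraphs $G_1, G_2$ that no Dir-GNN distinguishes but whose directed flag complexes this Dir-SNN distinguishes.
   Context: A directed simplicial complex is a pair $\mathcal{K}=(V,\Sigma)$, where $V$ is a finite vertex set and $\Sigma$ is a collection of non-empty ordered tuples of vertices (directed simplices) such that every non-empty ordered subtuple of a member of $\Sigma$ is also in $\Sigma$. A tuple $\sigma=(v_0,\dots,v_k)$ has dimension $\dim\sigma=k$ and is called a $k$-simplex. For $0\le i\le k$, the face map $d_i$ sends $\sigma$ to the $(k-1)$-simplex $(v_0,\dots,\hat v_i,\dots,v_k)$ obtained by deleting the $i$-th vertex while keeping the order of the remaining vertices; $d_i^{-1}(\sigma)$ denotes the set of simplices $\rho$ with $d_i(\rho)=\sigma$. The boundary of $\sigma$ is $\mathcal{B}(\sigma)=\{d_i(\sigma):0\le i\le\dim\sigma\}$, and the coboundary is $\mathcal{C}(\sigma)=\bigcup_{i=0}^{\dim\sigma+1}d_i^{-1}(\sigma)$. For simplices of equal dimension and integer $k \ge 1$, the lower $(k,i,j)$-adjacency $\mathcal{A}^{ij}_{\downarrow,k}(\sigma)$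 is the set of $\tau$ with $\dim\tau=\dim\sigma$ for which there is a simplex $\kappa$ with $\dim\kappa=\dim\sigma-k$ (taken to be $0$ if $k>\dim\sigma$) and $\kappa\subseteq d_i(\sigma)$, $\kappa\subseteq d_j(\tau)$. The upper $(k,i,j)$-adjacency $\mathcal{A}^{ij}_{\uparrow,k}(\sigma)$ is the set of $\tau$ with $\dim\tau=\dim\sigma$ for which there is a $\kappa$ with $\dim\kappa=\dim\sigma+k$ (taken to be $\dim\mathcal{K}$ if $k > \dim\mathcal{K} - \dim\sigma$), $\sigma\subseteq d_i(\kappa)$ and $\tau\subseteq d_j(\kappa)$. Here $\subseteq$ denotes being an ordered subtuple. The directed flag complex $\mathcal{K}_G$ of a digraph $G$ is the directed simplicial complex whose $k$-simplices are the tuples $(v_0,\dots,v_k)$ of distinct vertices with $(v_a,v_b)$ a directed edge of $G$ for all $a<b$. Its $0$- and $1$-simplices are the vertices and edges of $G$. A Dir-SNN layer $l$ updates the feature vector $\mathbf{x}_\sigma^l$ of each simplex $\sigma$ using a chosen collection of lower and upper $(k,i,j)$-adjacencies. For each chosen adjacency $\mathcal{A}$, a message $\mathbf{m}_{\sigma,\mathcal{A}}^{l+1}$ is formed by applying an aggregator $\bigoplus_{\tau\in\mathcal{A}(\sigma)}$ to $\psi_{\mathcal{A}}(\mathbf{x}^l_\sigma,\mathbf{x}^l_\tau,\mathbf{x}^l_\kappa)$, where $\kappa$ is the witnessing simplex. Boundary and coboundary messages are formed as $\bigoplus_{\tau\in\mathcal{B}(\sigma)}\psi_{\mathcal{B}}(\mathbf{x}^l_\sigma,\mathbf{x}^l_\tau)$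 and $\bigoplus_{\tau\in\mathcal{C}(\sigma)}\psi_{\mathcal{C}}(\mathbf{x}^l_\sigma,\mathbf{x}^l_\tau)$. The update is $\mathbf{x}_\sigma^{l+1}=\phi(\mathbf{x}_\sigma^l,\text{all messages})$, with learnable $\psi$'s and $\phi$. A Dir-GNN on a digraph updates each node $v$ as $\mathbf{x}_v^{l+1}=\phi\big(\mathbf{x}_v^l,\bigoplus_{u\in N_\leftarrow(v)}\psi_\leftarrow(\mathbf{x}_v^l,\mathbf{x}_u^l),\bigoplus_{u\in N_\rightarrow(v)}\psi_\rightarrow(\mathbf{x}_v^l,\mathbf{x}_u^l)\big)$, where $N_\leftarrow(v)=\{u:(u,v)\text{ edge}\}$ and $N_\rightarrow(v)=\{u:(v,u)\text{ edge}\}$. A network distinguishes two inputs if the multisets of final feature vectors (over all simplices, respectively all nodes) differ. *)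

From Stdlib Require Import Permutation.
From mathcomp Require Import all_boot.
Set Implicit Arguments. Unset Strict Implicit. Unset Printing Implicit Defensive.

Definition face (V : Type) (i : nat) (s : seq V) : seq V := take i s ++ drop i.+1 s.

Definition dim (V : Type) (s : seq V) : nat := (size s).-1.

Definition is_simplex (V : eqType) (e : rel V) (s : seq V) : bool :=
  [&& 0 < size s, uniq s & pairwise e s].

Definition tuples_of_size (V : finType) (n : nat) : seq (seq V) :=
  [seq tval t | t : n.-tuple V].

Definition flag_simplices (V : finType) (e : rel V) : seq (seq V) :=
  [seq s <- flatten [seq tuples_of_size V n | n <- iota 1 #|V|] | is_simplex e s].

Definition cdim (V : finType) (e : rel V) : nat :=
  (foldr maxn 0 [seq size s | s <- flag_simplices e]).-1.

Definition boundary (V : finType) (e : rel V) (sg : seq V) : seq (seq V) :=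
  [seq t <- [seq face i sg | i <- iota 0 (size sg)] | is_simplex e t].

Definition coboundary (V : finType) (e : rel V) (sg : seq V) : seq (seq V) :=
  [seq r <- flag_simplices e |
     (size r == (size sg).+1) && has (fun i => face i r == sg) (iota 0 (size sg).+1)].

Record adj_spec := AdjSpec { adj_up : bool; adj_k : nat; adj_i : nat; adj_j : nat }.

(* tau is (a)-adjacent to sigma, witnessed by kappa *)
Definition adj_rel (V : finType) (e : rel V) (a : adj_spec) (sg tau kap : seq V) : bool :=
  if adj_up a then
    [&& dim tau == dim sg,
        dim kap == (if adj_k a > cdim e - dim sg then cdim e else dim sg + adj_k a),
        adj_i a <= dim kap, adj_j a <= dim kap,
        subseq sg (face (adj_i a) kap) & subseq tau (face (adj_j a) kap)]
  else
    [&& dim tau == dim sg,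
        dim kap == (if adj_k a > dim sg then 0 else dim sg - adj_k a),
        adj_i a <= dim sg, adj_j a <= dim tau,
        subseq kap (face (adj_i a) sg) & subseq kap (face (adj_j a) tau)].

Definition adj_pairs (V : finType) (e : rel V) (a : adj_spec) (sg : seq V)
  : seq (seq V * seq V) :=
  [seq p <- [seq (t, k) | t <- flag_simplices e, k <- flag_simplices e]
     | adj_rel e a sg p.1 p.2].

Record snn_layer (F : Type) : Type := SNNLayer {
  snn_psiA : nat -> F -> F -> F -> F;   (* psi_A for the n-th chosen adjacency *)
  snn_aggA : nat -> seq F -> F;
  snn_psiB : F -> F -> F;
  snn_aggB : seq F -> F;
  snn_psiC : F -> F -> F;
  snn_aggC : seq F -> F;
  snn_phi  : F -> seq F -> F;
  snn_aggA_inv : forall n s t, Permutation s t -> snn_aggA n s = snn_aggA n t;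
  snn_aggB_inv : forall s t, Permutation s t -> snn_aggB s = snn_aggB t;
  snn_aggC_inv : forall s t, Permutation s t -> snn_aggC s = snn_aggC t }.

Record dir_snn (F : Type) : Type := DirSNN {
  snn_init : F;
  snn_layers : seq (snn_layer F) }.

Definition default_adj := AdjSpec false 1 0 0.

Definition snn_step (F : Type) (adjs : seq adj_spec) (L : snn_layer F)
    (V : finType) (e : rel V) (x : seq V -> F) : seq V -> F :=
  fun sg =>
    snn_phi L (x sg)
      ([seq snn_aggA L n
              [seq snn_psiA L n (x sg) (x p.1) (x p.2)
              | p <- adj_pairs e (nth default_adj adjs n) sg]
       | n <- iota 0 (size adjs)]
       ++ [:: snn_aggB L [seq snn_psiB L (x sg) (x t) | t <- boundary e sg];
              snn_aggC L [seq snn_psiC L (x sg) (x t) | t <- coboundary e sg]]).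

Definition snn_features (F : Type) (adjs : seq adj_spec) (N : dir_snn F)
    (V : finType) (e : rel V) : seq V -> F :=
  foldl (fun x L => snn_step adjs L e x) (fun _ => snn_init N) (snn_layers N).

Definition snn_output (F : Type) (adjs : seq adj_spec) (N : dir_snn F)
    (V : finType) (e : rel V) : seq F :=
  [seq snn_features adjs N e sg | sg <- flag_simplices e].

Definition snn_distinguishes (F : Type) (adjs : seq adj_spec) (N : dir_snn F)
    (V1 : finType) (e1 : rel V1) (V2 : finType) (e2 : rel V2) : Prop :=
  ~ Permutation (snn_output adjs N e1) (snn_output adjs N e2).

Record gnn_layer (F : Type) : Type := GNNLayer {
  gnn_psi_in : F -> F -> F;
  gnn_agg_in : seq F -> F;
  gnn_psi_out : F -> F -> F;
  gnn_agg_out : seq F -> F;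
  gnn_phi : F -> F -> F -> F;
  gnn_agg_in_inv : forall s t, Permutation s t -> gnn_agg_in s = gnn_agg_in t;
  gnn_agg_out_inv : forall s t, Permutation s t -> gnn_agg_out s = gnn_agg_out t }.

Record dir_gnn (F : Type) : Type := DirGNN {
  gnn_init : F;
  gnn_layers : seq (gnn_layer F) }.

Definition in_nbrs (V : finType) (e : rel V) (v : V) : seq V := [seq u <- enum V | e u v].
Definition out_nbrs (V : finType) (e : rel V) (v : V) : seq V := [seq u <- enum V | e v u].

Definition gnn_step (F : Type) (L : gnn_layer F) (V : finType) (e : rel V)
    (x : V -> F) : V -> F :=
  fun v => gnn_phi L (x v)
             (gnn_agg_in L [seq gnn_psi_in L (x v) (x u) | u <- in_nbrs e v])
             (gnn_agg_out L [seq gnn_psi_out L (x v) (x u) | u <- out_nbrs e v]).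

Definition gnn_features (F : Type) (N : dir_gnn F) (V : finType) (e : rel V) : V -> F :=
  foldl (fun x L => gnn_step L e x) (fun _ => gnn_init N) (gnn_layers N).

Definition gnn_output (F : Type) (N : dir_gnn F) (V : finType) (e : rel V) : seq F :=
  [seq gnn_features N e v | v <- enum V].

Definition gnn_distinguishes (F : Type) (N : dir_gnn F)
    (V1 : finType) (e1 : rel V1) (V2 : finType) (e2 : rel V2) : Prop :=
  ~ Permutation (gnn_output N e1) (gnn_output N e2).

Definition digraph_iso (V1 : finType) (e1 : rel V1) (V2 : finType) (e2 : rel V2) : Prop :=
  exists f : V1 -> V2, bijective f /\ forall u v, e1 u v = e2 (f u) (f v).

From Stdlib Require Import Permutation.
From mathcomp Require Import all_boot.
Set Implicit Arguments. Unset Strict Implicit. Unset Printing Implicit Defensive.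

(* (i) For a vertex (v) of K_G, the upper (1,0,1)- and (1,1,0)-adjacent simplices are
   the vertices (u) with u -> v, resp. v -> u, each witnessed by the connecting edge.
   So a Dir-SNN with these two adjacencies runs any Dir-GNN on the vertices of K_G:
   features live in [option F], vertices (recognised by their empty boundary) carry
   [Some] of the GNN feature and all other simplices carry [None]; discarding the
   [None]s recovers the Dir-GNN output.
   (ii) If all in-degrees and all out-degrees of a digraph agree, a Dir-GNN started
   from a constant feature stays constant, so it cannot separate two such digraphs
   of the same order and degrees: here the circulant digraph i -> i+1, i+2 on Z/4
   and the bidirected 4-cycle.  The first contains a transitive triangle, the second
   is triangle free, and aggregating "has a non-empty boundary" over boundaries twice
   detects 2-simplices. *)

Lemma perm_eq_Permutation (T : eqType) (s t : seq T) : perm_eq s t -> Permutation s t.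
Proof.
elim: s t => [|a s IHs] t; first by rewrite perm_sym => /perm_nilP ->.
move=> st; have ta : a \in t by rewrite -(perm_mem st) mem_head.
case/splitPr: ta st => t1 t2 st; apply: Permutation_cons_app; apply: IHs.
by rewrite -(perm_cons a) (perm_trans st) // -cat1s perm_catCA.
Qed.

(* Stdlib's [Permutation_map] concludes with [List.map], which the [seq] rewrite
   lemmas do not recognise. *)
Lemma Permutation_seq_map (T U : Type) (f : T -> U) (s t : seq T) :
  Permutation s t -> Permutation (map f s) (map f t).
Proof. exact: Permutation_map. Qed.

Lemma Permutation_has (T : Type) (p : pred T) (s t : seq T) :
  Permutation s t -> has p s = has p t.
Proof. by elim=> //= [x l l' _ -> | x y l | l l' l'' _ -> _ ->] //; rewrite orbCA. Qed.

Lemma Permutation_pmap (T U : Type) (f : T -> option U) (s t : seq T) :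
  Permutation s t -> Permutation (pmap f s) (pmap f t).
Proof.
elim=> //= [x l l' _ IH | x y l | l l' l'' _ IH1 _ IH2].
- by case: (f x) => //= y; apply: perm_skip.
- by case: (f x); case: (f y) => //= *; apply: perm_swap.
- exact: Permutation_trans IH2.
Qed.

Lemma map_const (T U : Type) (c : U) (s : seq T) : [seq c | _ <- s] = nseq (size s) c.
Proof. by elim: s => //= _ s ->. Qed.

Lemma pmap_id_map_omap (T U W : Type) (f : U -> W) (h : T -> option U) (s : seq T) :
  pmap id [seq omap f (h x) | x <- s] = map f (pmap h s).
Proof. by elim: s => //= x s ->; case: (h x). Qed.

Definition vertex_of (V : Type) (s : seq V) : option V := if s is [:: v] then Some v else None.

Lemma vertex_ofK (V : Type) : ocancel (@vertex_of V) (fun v => [:: v]).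
Proof. by case=> [|? []]. Qed.

Lemma size_face (T : Type) i (s : seq T) : i < size s -> size (face i s) = (size s).-1.
Proof.
rewrite /face size_cat size_take size_drop => lt_is; rewrite lt_is.
by case: (size s) lt_is => // n; rewrite ltnS subSS => /subnKC.
Qed.

Section FlagComplex.
Variables (V : finType) (e : rel V).

Lemma mem_tuples_of_size n s : (s \in tuples_of_size V n) = (size s == n).
Proof.
apply/mapP/eqP => [[t _ ->] | <-]; first exact: size_tuple.
by exists (in_tuple s); rewrite ?mem_enum.
Qed.

Lemma flag_simplices_uniq : uniq (flag_simplices e).
Proof.
rewrite filter_uniq //; elim: (iota 1 #|V|) (iota_uniq 1 #|V|) => //= n ns IHns.
case/andP=> n_ns ns_uniq; rewrite cat_uniq IHns // andbT.
rewrite map_inj_uniq ?enum_uniq /=; last exact: val_inj.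
apply/hasPn => s /flatten_mapP[m m_ns]; rewrite !mem_tuples_of_size => /eqP sm.
by apply/negP => /eqP sn; rewrite -sn sm m_ns in n_ns.
Qed.

Lemma mem_flag_simplices s : (s \in flag_simplices e) = is_simplex e s.
Proof.
rewrite mem_filter andbC; case s_simplex: (is_simplex e s); rewrite ?andbF ?andbT //.
case/and3P: s_simplex => s_gt0 s_uniq _; apply/flatten_mapP; exists (size s).
  by rewrite mem_iota s_gt0 add1n ltnS -(card_uniqP s_uniq) max_card.
by rewrite mem_tuples_of_size.
Qed.

Lemma dim_le_cdim s : s \in flag_simplices e -> dim s <= cdim e.
Proof.
rewrite /cdim /dim -!subn1 => s_flag; apply: leq_sub2r.
elim: (flag_simplices e) s_flag => //= t ts IHts; rewrite in_cons.
case/orP=> [/eqP <- | /IHts]; first exact: leq_maxl.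
by move/leq_trans; apply; apply: leq_maxr.
Qed.

Lemma mem_adj_pairs a sg p : (p \in adj_pairs e a sg) =
  [&& adj_rel e a sg p.1 p.2, p.1 \in flag_simplices e & p.2 \in flag_simplices e].
Proof.
rewrite mem_filter; congr (_ && _); apply/allpairsP/andP => [[[t k] [/= t_flag k_flag ->]] //|].
by case: p => t k [/= t_flag k_flag]; exists (t, k).
Qed.

Lemma adj_pairs_uniq a sg : uniq (adj_pairs e a sg).
Proof. by rewrite filter_uniq // allpairs_uniq ?flag_simplices_uniq // => -[? ?] [? ?]. Qed.

Lemma boundary_sub_flag s : {subset boundary e s <= flag_simplices e}.
Proof. by move=> t; rewrite mem_filter mem_flag_simplices => /andP[]. Qed.

Lemma boundary_eq_nil s : is_simplex e s -> (boundary e s == [::]) = (size s <= 1).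
Proof.
case: s => [|a [|b s]] // /and3P[_]; rewrite cons_uniq pairwise_cons.
case/andP=> _ bs_uniq /andP[_ bs_pairwise].
by rewrite /boundary /= /face /= /is_simplex bs_uniq bs_pairwise.
Qed.

Lemma has_boundary_size k s :
  is_simplex e s -> has (fun t => k < size t) (boundary e s) = (k.+1 < size s).
Proof.
move=> s_simplex; rewrite (@eq_in_has _ _ (fun=> k.+1 < size s)); last first.
  move=> t; rewrite mem_filter => /andP[_ /mapP[i]]; rewrite mem_iota => /andP[_ i_lt] ->.
  by rewrite size_face //; case: (size s) i_lt.
case: ltnP => [two_le | _]; last by apply/hasPn.
move: (boundary_eq_nil s_simplex); case: (boundary e s) => //=.
by move/esym; rewrite leqNgt (leq_ltn_trans _ two_le).
Qed.

End FlagComplex.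

Definition in_adj := AdjSpec true 1 0 1.
Definition out_adj := AdjSpec true 1 1 0.

Section VertexAdjacency.
Variables (V : finType) (e : rel V).

Lemma mem_vertex_upper_adj i j v t k : i <= 1 -> j <= 1 ->
  ((t, k) \in adj_pairs e (AdjSpec true 1 i j) [:: v]) =
  [&& is_simplex e k, size k == 2, face i k == [:: v] & t == face j k].
Proof.
move=> i_le j_le; rewrite mem_adj_pairs /adj_rel /= subn0 !mem_flag_simplices.
case k_simplex: (is_simplex e k); rewrite ?andbF //=.
have := @dim_le_cdim _ e k; rewrite mem_flag_simplices k_simplex => /(_ isT) dim_k.
case: k k_simplex dim_k => [|a [|b [|? k]]] // _; rewrite /dim /=.
- by case: i i_le => [|[|]] //; rewrite /face /= !andbF.
- move=> cdim_ge; rewrite ltnNge cdim_ge i_le j_le /face /=.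
  have face_edge l : l <= 1 -> exists c, take l [:: a; b] ++ drop l.+1 [:: a; b] = [:: c].
    by case: l => [|[|]] // _; eexists.
  have [[c ->] [d ->]] := (face_edge i i_le, face_edge j j_le).
  rewrite sub1seq mem_seq1; case: t => [|x [|y t]]; rewrite ?andbF //=.
  - by rewrite !eqseq_cons !andbT eq_sym; case: (x == d).
  - by apply/esym/negbTE/and3P => -[_ _ /eqP].
- by move=> k_lt; rewrite ltnNge (leq_trans _ k_lt) /= ?andbF.
Qed.

Hypothesis e_irr : irreflexive e.

Lemma is_simplex_edge u w : is_simplex e [:: u; w] = e u w.
Proof.
rewrite /is_simplex /= inE !andbT andbC; case: eqP => [-> | _]; last by rewrite andbT.
by rewrite e_irr.
Qed.

Lemma in_adj_pairs v :
  perm_eq (adj_pairs e in_adj [:: v]) [seq ([:: u], [:: u; v]) | u <- in_nbrs e v].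
Proof.
apply: uniq_perm; first exact: adj_pairs_uniq.
  by rewrite map_inj_uniq; [exact/filter_uniq/enum_uniq | move=> u w []].
case=> t k; rewrite mem_vertex_upper_adj // /in_nbrs; apply/idP/mapP => [|[u]].
  case: k => [|a [|b [|? ?]]]; rewrite /face /= ?andbF //.
  case/and3P => ab_edge /eqP[b_v] /eqP ->; subst b.
  by exists a; rewrite // mem_filter mem_enum -is_simplex_edge ab_edge.
by rewrite mem_filter => /andP[uv_edge _] [-> ->]; rewrite is_simplex_edge uv_edge /face /= !eqxx.
Qed.

Lemma out_adj_pairs v :
  perm_eq (adj_pairs e out_adj [:: v]) [seq ([:: u], [:: v; u]) | u <- out_nbrs e v].
Proof.
apply: uniq_perm; first exact: adj_pairs_uniq.
  by rewrite map_inj_uniq; [exact/filter_uniq/enum_uniq | move=> u w []].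
case=> t k; rewrite mem_vertex_upper_adj // /out_nbrs; apply/idP/mapP => [|[u]].
  case: k => [|a [|b [|? ?]]]; rewrite /face /= ?andbF //.
  case/and3P => ab_edge /eqP[a_v] /eqP ->; subst a.
  by exists b; rewrite // mem_filter mem_enum -is_simplex_edge ab_edge.
by rewrite mem_filter => /andP[vu_edge _] [-> ->]; rewrite is_simplex_edge vu_edge /face /= !eqxx.
Qed.

End VertexAdjacency.

Definition vertex_adjs := [:: in_adj; out_adj].

Definition gnn_id_layer (F : Type) (c : F) : gnn_layer F :=
  @GNNLayer F (fun _ _ => c) (fun _ => c) (fun _ _ => c) (fun _ => c) (fun x _ _ => x)
    (fun _ _ _ => erefl) (fun _ _ _ => erefl).

Section GNNSimulation.
Variables (F : Type) (N : dir_gnn F).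
Local Notation val := (odflt (gnn_init N)).

Definition simulating_layer (L : gnn_layer F) : snn_layer (option F).
Proof.
refine (@SNNLayer _
  (fun n a b _ => Some ((if n == 0 then gnn_psi_in L else gnn_psi_out L) (val a) (val b)))
  (fun n s => Some ((if n == 0 then gnn_agg_in L else gnn_agg_out L) (map val s)))
  (fun _ _ => None) (fun s => if nilp s then None else Some (gnn_init N))
  (fun _ _ => None) (fun _ => None)
  (* Message 2 aggregates the boundary: it is [None] exactly on vertices. *)
  (fun a ms => if nth None ms 2 is None
               then Some (gnn_phi L (val a) (val (nth None ms 0)) (val (nth None ms 1)))
               else None) _ _ _).
- move=> n s t /(Permutation_seq_map val) st; congr Some.
  by case: (n == 0); [exact: gnn_agg_in_inv | exact: gnn_agg_out_inv].
- by move=> s t st; rewrite /nilp (Permutation_length st : size s = size t).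
- by [].
Defined.

(* The trailing identity layer makes the output [None] off the vertices even when
   [N] has no layers. *)
Definition simulating_snn : dir_snn (option F) :=
  DirSNN None (map simulating_layer (rcons (gnn_layers N) (gnn_id_layer (gnn_init N)))).

Variables (V : finType) (e : rel V).
Hypothesis e_irr : irreflexive e.

Lemma simulating_step L x g : (forall v, val (x [:: v]) = g v) ->
  {in flag_simplices e, forall s,
    snn_step vertex_adjs (simulating_layer L) e x s = omap (gnn_step L e g) (vertex_of s)}.
Proof.
move=> xg s; rewrite mem_flag_simplices => s_simplex; rewrite /snn_step /=.
rewrite /nilp size_map size_eq0 (boundary_eq_nil s_simplex).
case: s s_simplex => [|v [|w s]] //= _; rewrite /gnn_step xg -!map_comp.
congr (Some (gnn_phi _ _ _ _)); [apply: gnn_agg_in_inv | apply: gnn_agg_out_inv].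
- apply: Permutation_trans (Permutation_seq_map _ (perm_eq_Permutation (in_adj_pairs e_irr v))) _.
  by rewrite -map_comp; apply/Permutation_refl'/eq_map => u /=; rewrite xg.
- apply: Permutation_trans (Permutation_seq_map _ (perm_eq_Permutation (out_adj_pairs e_irr v))) _.
  by rewrite -map_comp; apply/Permutation_refl'/eq_map => u /=; rewrite xg.
Qed.

Lemma simulating_layers Ls x g : (forall v, val (x [:: v]) = g v) -> forall v,
  val (foldl (fun x L => snn_step vertex_adjs L e x) x (map simulating_layer Ls) [:: v]) =
  foldl (fun g L => gnn_step L e g) g Ls v.
Proof.
elim: Ls x g => [|L Ls IHLs] x g xg //=; apply: IHLs => v.
by rewrite (simulating_step _ xg) ?mem_flag_simplices.
Qed.

Lemma simulating_features :
  {in flag_simplices e, forall s,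
    snn_features vertex_adjs simulating_snn e s = omap (gnn_features N e) (vertex_of s)}.
Proof.
rewrite /snn_features /gnn_features /= map_rcons !foldl_rcons.
exact/simulating_step/simulating_layers.
Qed.

Lemma simulating_snn_output :
  Permutation (pmap id (snn_output vertex_adjs simulating_snn e)) (gnn_output N e).
Proof.
rewrite /snn_output; have /eq_in_map -> := simulating_features; rewrite pmap_id_map_omap.
apply/Permutation_seq_map/perm_eq_Permutation/uniq_perm; last 1 first.
- by move=> v; rewrite (can2_mem_pmap (@vertex_ofK V)) // mem_flag_simplices mem_enum.
- exact: pmap_uniq (@vertex_ofK V) _ (flag_simplices_uniq e).
- exact: enum_uniq.
Qed.

End GNNSimulation.

Section RegularDigraphs.
Variables (F : Type) (din dout : nat).

Definition regular_gnn_feature (Ls : seq (gnn_layer F)) (c : F) : F :=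
  foldl (fun c L => gnn_phi L c (gnn_agg_in L (nseq din (gnn_psi_in L c c)))
                               (gnn_agg_out L (nseq dout (gnn_psi_out L c c)))) c Ls.

Variables (V : finType) (e : rel V).
Hypotheses (in_deg : forall v, size (in_nbrs e v) = din)
           (out_deg : forall v, size (out_nbrs e v) = dout).

Lemma gnn_layers_regular Ls c x : x =1 (fun=> c) ->
  foldl (fun x L => gnn_step L e x) x Ls =1 (fun=> regular_gnn_feature Ls c).
Proof.
elim: Ls c x => [|L Ls IHLs] c x xc //=; apply: IHLs => v.
by rewrite /gnn_step !xc !(eq_map (fun u => congr1 _ (xc u))) !map_const in_deg out_deg.
Qed.

Lemma gnn_output_regular (N : dir_gnn F) :
  gnn_output N e = nseq #|V| (regular_gnn_feature (gnn_layers N) (gnn_init N)).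
Proof.
by rewrite /gnn_output (eq_map (gnn_layers_regular (gnn_layers N) (fun=> erefl))) map_const cardE.
Qed.

End RegularDigraphs.

Lemma regular_not_gnn_distinguishes F (N : dir_gnn F) (V1 V2 : finType)
    (e1 : rel V1) (e2 : rel V2) din dout :
  #|V1| = #|V2| ->
  (forall v, size (in_nbrs e1 v) = din) -> (forall v, size (out_nbrs e1 v) = dout) ->
  (forall v, size (in_nbrs e2 v) = din) -> (forall v, size (out_nbrs e2 v) = dout) ->
  ~ gnn_distinguishes N e1 e2.
Proof.
move=> card12 in1 out1 in2 out2; apply.
by rewrite (gnn_output_regular in1 out1) (gnn_output_regular in2 out2) card12.
Qed.

(* With the two adjacencies of [vertex_adjs], message 2 is the boundary message. *)
Definition boundary_layer : snn_layer bool.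
Proof.
refine (@SNNLayer bool (fun _ _ _ _ => false) (fun _ _ => false) (fun _ b => b) (has id)
  (fun _ _ => false) (fun _ => false) (fun _ ms => nth false ms 2) _ _ _) => //.
exact: Permutation_has.
Defined.

Definition simplex_detector (n : nat) : dir_snn bool := DirSNN true (nseq n boundary_layer).

Section SimplexDetector.
Variables (V : finType) (e : rel V).

Lemma boundary_layer_step k x : {in flag_simplices e, forall s, x s = (k < size s)} ->
  {in flag_simplices e, forall s,
    snn_step vertex_adjs boundary_layer e x s = (k.+1 < size s)}.
Proof.
move=> xk s; rewrite mem_flag_simplices => s_simplex.
rewrite /snn_step /= has_map -(has_boundary_size k s_simplex).
by apply: eq_in_has => t /boundary_sub_flag /xk.
Qed.

Lemma boundary_layers k n x : {in flag_simplices e, forall s, x s = (k < size s)} ->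
  {in flag_simplices e, forall s,
    foldl (fun x L => snn_step vertex_adjs L e x) x (nseq n boundary_layer) s = (k + n < size s)}.
Proof.
elim: n k x => [|n IHn] k x xk; first by rewrite addn0.
by rewrite addnS -addSn; apply/IHn/boundary_layer_step.
Qed.

Lemma simplex_detector_features n :
  {in flag_simplices e, forall s, snn_features vertex_adjs (simplex_detector n) e s = (n < size s)}.
Proof.
move=> s s_flag; rewrite -[X in X < _]add0n; apply: boundary_layers s_flag => t.
by rewrite mem_flag_simplices => /and3P[].
Qed.

Lemma simplex_detector_output n :
  has id (snn_output vertex_adjs (simplex_detector n) e) =
  has (fun s => n < size s) (flag_simplices e).
Proof. by rewrite has_map; apply: eq_in_has => s /simplex_detector_features <-. Qed.

End SimplexDetector.

Lemma simplex_detector_distinguishes n (V1 V2 : finType) (e1 : rel V1) (e2 : rel V2) :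
  has (fun s => n < size s) (flag_simplices e1) != has (fun s => n < size s) (flag_simplices e2) ->
  snn_distinguishes vertex_adjs (simplex_detector n) e1 e2.
Proof. by move=> /eqP neq /(Permutation_has id); rewrite !simplex_detector_output. Qed.

Definition circ4 : rel 'I_4 := fun i j => (j == (i + 1) %% 4 :> nat) || (j == (i + 2) %% 4 :> nat).
(* The 4-cycle 0 - 1 - 2 - 3 - 0 with both orientations of every edge. *)
Definition bicycle4 : rel 'I_4 := fun i j => odd i != odd j.

Definition o0 : 'I_4 := @Ordinal 4 0 isT.
Definition o1 : 'I_4 := @Ordinal 4 1 isT.
Definition o2 : 'I_4 := @Ordinal 4 2 isT.
Definition o3 : 'I_4 := @Ordinal 4 3 isT.

Lemma enum_ord4 : enum 'I_4 = [:: o0; o1; o2; o3].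
Proof. by apply: (inj_map val_inj); rewrite val_enum_ord. Qed.

Lemma circ4_irreflexive : irreflexive circ4.
Proof. by case=> -[|[|[|[|]]]]. Qed.

Lemma bicycle4_irreflexive : irreflexive bicycle4.
Proof. by move=> i; rewrite /bicycle4 eqxx. Qed.

Lemma circ4_regular :
  (forall v, size (in_nbrs circ4 v) = 2) /\ (forall v, size (out_nbrs circ4 v) = 2).
Proof. by split=> v; rewrite /in_nbrs /out_nbrs enum_ord4; case: v => -[|[|[|[|]]]]. Qed.

Lemma bicycle4_regular :
  (forall v, size (in_nbrs bicycle4 v) = 2) /\ (forall v, size (out_nbrs bicycle4 v) = 2).
Proof. by split=> v; rewrite /in_nbrs /out_nbrs enum_ord4; case: v => -[|[|[|[|]]]]. Qed.

Lemma bicycle4_triangle_free a b c : bicycle4 a b -> bicycle4 b c -> ~~ bicycle4 a c.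
Proof. by rewrite /bicycle4; case: (odd a); case: (odd b); case: (odd c). Qed.

Lemma circ4_not_iso_bicycle4 : ~ digraph_iso circ4 bicycle4.
Proof.
case=> f [_ f_edge]; have := @bicycle4_triangle_free (f o0) (f o1) (f o2).
by rewrite -!f_edge => /(_ isT isT).
Qed.

Lemma circ4_has_2simplex : has (fun s => 2 < size s) (flag_simplices circ4).
Proof. by apply/hasP; exists [:: o0; o1; o2]; rewrite ?mem_flag_simplices. Qed.

Lemma bicycle4_no_2simplex : ~~ has (fun s => 2 < size s) (flag_simplices bicycle4).
Proof.
apply/hasPn => -[|a [|b [|c s]]] //; rewrite mem_flag_simplices => /and3P[_ _].
rewrite !pairwise_cons => /andP[/and3P[ab ac _] /andP[/andP[bc _] _]].
by rewrite (negbTE (bicycle4_triangle_free ab bc)) in ac.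
Qed.

Theorem theorem1 :
  exists adjs : seq adj_spec,
    all (fun a => 0 < adj_k a) adjs /\
    (forall (V1 V2 : finType) (e1 : rel V1) (e2 : rel V2),
        irreflexive e1 -> irreflexive e2 ->
        (exists (F : Type) (N : dir_gnn F), gnn_distinguishes N e1 e2) ->
        exists (F : Type) (M : dir_snn F), snn_distinguishes adjs M e1 e2) /\
    (exists (V1 V2 : finType) (e1 : rel V1) (e2 : rel V2),
        [/\ irreflexive e1, irreflexive e2, ~ digraph_iso e1 e2,
            (forall (F : Type) (N : dir_gnn F), ~ gnn_distinguishes N e1 e2) &
            exists (F : Type) (M : dir_snn F), snn_distinguishes adjs M e1 e2]).
Proof.
exists vertex_adjs; split=> //; split.
  move=> V1 V2 e1 e2 e1_irr e2_irr [F [N gnn_dist]].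
  exists (option F), (simulating_snn N) => /(Permutation_pmap id) snn_perm; apply: gnn_dist.
  apply: Permutation_trans (simulating_snn_output N e2_irr).
  exact: Permutation_trans (Permutation_sym (simulating_snn_output N e1_irr)) snn_perm.
exists 'I_4, 'I_4, circ4, bicycle4; split.
- exact: circ4_irreflexive.
- exact: bicycle4_irreflexive.
- exact: circ4_not_iso_bicycle4.
- have [in1 out1] := circ4_regular; have [in2 out2] := bicycle4_regular.
  by move=> F N; apply: regular_not_gnn_distinguishes in1 out1 in2 out2.
- exists bool, (simplex_detector 2); apply: simplex_detector_distinguishes.
  by rewrite circ4_has_2simplex (negbTE bicycle4_no_2simplex).
Qed.
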